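(* Let $ABC$ be a triangle and let $P$ be a point. Let $H_A, H_B, H_C$ be the orthocenters of the triangles $BPC$, $CPA$, $PAB$ respectively, and let $\triangle_A, \triangle_B, \triangle_C$ denote the triangles $AH_BH_C$, $BH_CH_A$, $CH_AH_B$ respectively. Then $\triangle_A, \triangle_B, \triangle_C$ have a common orthocenter.
   Context: All triangles involved are assumed nondegenerate so that their orthocenters are defined. *)

From HB Require Import structures.
From mathcomp Require Import all_boot all_order all_algebra.
Set Implicit Arguments. Unset Strict Implicit. Unset Printing Implicit Defensive.
Import Order.TTheory GRing.Theory Num.Theory.
Local Open Scope ring_scope.

Definition point (R : realFieldType) := (R * R)%type.

Definition dotv (R : realFieldType) (X Y U V : point R) : R :=
  (Y.1 - X.1) * (V.1 - U.1) + (Y.2 - X.2) * (V.2 - U.2).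

Definition nondeg_triangle (R : realFieldType) (A B C : point R) : Prop :=
  (B.1 - A.1) * (C.2 - A.2) - (B.2 - A.2) * (C.1 - A.1) != 0.

Definition is_orthocenter (R : realFieldType) (H A B C : point R) : Prop :=
  [/\ dotv A H B C = 0, dotv B H C A = 0 & dotv C H A B = 0].

From HB Require Import structures.
From mathcomp Require Import all_boot all_order all_algebra.
From mathcomp Require Import ring lra.
Set Implicit Arguments. Unset Strict Implicit. Unset Printing Implicit Defensive.
Import Order.TTheory GRing.Theory Num.Theory.
Local Open Scope ring_scope.

(* In the triangle A H_B H_C the side A H_C is perpendicular to PB, so the
   altitude from H_B is the line l_B through H_B parallel to PB; likewise
   the altitude from H_C is the line l_C through H_C parallel to PC.  The
   same lines occur in the other two triangles, so all three orthocenters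
   are the common point of l_A, l_B, l_C, once these are shown concurrent.
   Write a, b, c for the vectors PA, PB, PC and [x,y] for the cross product.
   The relation [b,c] a + [c,a] b + [a,b] c = 0 makes the combination
   [b,c] l_A + [c,a] l_B + [a,b] l_C of the equations of the lines
   independent of the point, and [b,c] [PH_A, a] = (b.c)(c.a - a.b) shows
   that this constant vanishes. *)

Section Plane.
Variable R : realFieldType.
Implicit Types A B C P Q H U V W X Y Z : point R.

Definition crossv X Y U V : R :=
  (Y.1 - X.1) * (V.2 - U.2) - (Y.2 - X.2) * (V.1 - U.1).

Lemma dotvNl X Y U V : dotv Y X U V = - dotv X Y U V.
Proof. by rewrite /dotv; ring. Qed.

Lemma dotvNr X Y U V : dotv X Y V U = - dotv X Y U V.
Proof. by rewrite /dotv; ring. Qed.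

Lemma dotv_self_neq0 U V : U != V -> dotv U V U V != 0.
Proof.
move=> neqUV; apply: contraNneq neqUV; case: U V => [u1 u2] [v1 v2].
rewrite /dotv /= -!expr2 => /eqP; rewrite paddr_eq0 ?sqr_ge0 // !sqrf_eq0.
by rewrite !subr_eq0 => /andP[/eqP-> /eqP->].
Qed.

Lemma nondeg_triangle_neq A B C :
  nondeg_triangle A B C -> [/\ A != B, A != C & B != C].
Proof.
by move=> nd; split; apply: contraNneq nd => eq; apply/eqP; rewrite eq; ring.
Qed.

Lemma dotv_eq0_of_crossv_eq0 X Y U V W Z :
  U != V -> crossv X Y U V = 0 -> dotv W Z U V = 0 -> dotv X Y W Z = 0.
Proof.
move=> /dotv_self_neq0 nzUV parXY perpWZ; apply: (mulfI nzUV); rewrite mulr0.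
have -> : dotv U V U V * dotv X Y W Z =
    dotv X Y U V * dotv W Z U V + crossv X Y U V * crossv W Z U V.
  by rewrite /dotv /crossv; ring.
by rewrite parXY perpWZ mulr0 mul0r addr0.
Qed.

Lemma crossv_lines_meet X Y U V W Z :
  crossv U V W Z != 0 -> exists Q, crossv X Q U V = 0 /\ crossv Y Q W Z = 0.
Proof.
rewrite /crossv => nz.
set u1 := V.1 - U.1 in nz *; set u2 := V.2 - U.2 in nz *.
set w1 := Z.1 - W.1 in nz *; set w2 := Z.2 - W.2 in nz *.
set a := X.1 * u2 - X.2 * u1; set b := Y.1 * w2 - Y.2 * w1.
exists ((b * u1 - a * w1) / (u1 * w2 - u2 * w1),
        (b * u2 - a * w2) / (u1 * w2 - u2 * w1)).
by split; rewrite /= /a /b; field.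
Qed.

Lemma dotv_altitudes_sum H A B C : dotv A H B C + dotv B H C A + dotv C H A B = 0.
Proof. by rewrite /dotv; ring. Qed.

Lemma is_orthocenter_of_altitudes H A B C :
  dotv B H C A = 0 -> dotv C H A B = 0 -> is_orthocenter H A B C.
Proof.
move=> hB hC; split=> //.
by have := dotv_altitudes_sum H A B C; rewrite hB hC !addr0.
Qed.

Lemma is_orthocenter_swap12 H A B C :
  is_orthocenter H A B C -> is_orthocenter H B A C.
Proof. by case=> hA hB hC; split; rewrite dotvNr ?hA ?hB ?hC oppr0. Qed.

Lemma is_orthocenter_of_parallels P X Y Z HY HZ Q :
  P != Y -> P != Z -> is_orthocenter HY Z P X -> is_orthocenter HZ X P Y ->
  crossv HY Q P Y = 0 -> crossv HZ Q P Z = 0 -> is_orthocenter Q X HY HZ.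
Proof.
move=> nPY nPZ [_ _ perpXHY] [perpXHZ _ _] parY parZ.
apply: is_orthocenter_of_altitudes.
  by apply: (dotv_eq0_of_crossv_eq0 nPY parY); rewrite dotvNl perpXHZ oppr0.
by apply: (dotv_eq0_of_crossv_eq0 nPZ parZ); rewrite dotvNr perpXHY oppr0.
Qed.

Lemma orthocenter_crossv H P A B C : is_orthocenter H B P C ->
  crossv P B P C * crossv P H P A = dotv P B P C * (dotv P C P A - dotv P A P B).
Proof.
case=> perpB _ perpC.
have -> : crossv P B P C * crossv P H P A = dotv P B P C * (dotv P C P A - dotv P A P B)
    - dotv P C P A * dotv C H B P - dotv P A P B * dotv B H P C.
  by rewrite /crossv /dotv; ring.
by rewrite perpB perpC !mulr0 !subr0.
Qed.

Lemma crossv_cyclic_sum P A B C Q :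
  crossv P B P C * crossv P Q P A + crossv P C P A * crossv P Q P B
    + crossv P A P B * crossv P Q P C = 0.
Proof. by rewrite /crossv; ring. Qed.

Lemma orthocenter_crossv_cyclic_sum P A B C HA HB HC :
  is_orthocenter HA B P C -> is_orthocenter HB C P A -> is_orthocenter HC A P B ->
  crossv P B P C * crossv P HA P A + crossv P C P A * crossv P HB P B
    + crossv P A P B * crossv P HC P C = 0.
Proof.
move=> /(orthocenter_crossv A) -> /(orthocenter_crossv B) -> /(orthocenter_crossv C) ->.
by rewrite /dotv; ring.
Qed.

Lemma orthocenter_parallels_concurrent P A B C HA HB HC Q :
  crossv P A P B != 0 ->
  is_orthocenter HA B P C -> is_orthocenter HB C P A -> is_orthocenter HC A P B ->
  crossv HA Q P A = 0 -> crossv HB Q P B = 0 -> crossv HC Q P C = 0.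
Proof.
move=> nPAB oA oB oC parA parB.
have sum0 : crossv P B P C * crossv HA Q P A + crossv P C P A * crossv HB Q P B
    + crossv P A P B * crossv HC Q P C = 0.
  have := crossv_cyclic_sum P A B C Q.
  have := orthocenter_crossv_cyclic_sum oA oB oC.
  rewrite /crossv; lra.
by move/eqP: sum0; rewrite parA parB !mulr0 !add0r mulf_eq0 (negbTE nPAB) => /eqP.
Qed.

End Plane.

Theorem proposition2p1 (R : realFieldType) (A B C P HA HB HC : point R) :
  nondeg_triangle A B C ->
  nondeg_triangle B P C -> nondeg_triangle C P A -> nondeg_triangle P A B ->
  is_orthocenter HA B P C -> is_orthocenter HB C P A -> is_orthocenter HC P A B ->
  nondeg_triangle A HB HC -> nondeg_triangle B HC HA -> nondeg_triangle C HA HB ->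
  exists H : point R,
    [/\ is_orthocenter H A HB HC, is_orthocenter H B HC HA
      & is_orthocenter H C HA HB].
Proof.
move=> _ nBPC _ nPAB oA oB /is_orthocenter_swap12 oC _ _ _.
have [nPA nPB _] := nondeg_triangle_neq nPAB.
have [_ _ nPC] := nondeg_triangle_neq nBPC.
have [Q [parA parB]] := crossv_lines_meet HA HB nPAB.
have parC := orthocenter_parallels_concurrent nPAB oA oB oC parA parB.
exists Q; split.
- exact: is_orthocenter_of_parallels nPB nPC oB oC parB parC.
- exact: is_orthocenter_of_parallels nPC nPA oC oA parC parA.
- exact: is_orthocenter_of_parallels nPA nPB oA oB parA parB.
Qed.
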